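(* Let $Z$ be an abelian group, $K$ a group, and $\theta:K\times K\to Z$ a loop cocycle such that $K\ltimes_\theta Z$ is a commutative A-loop. Let $\mu:K\times K\to Z$ be a group cocycle with $\mu(x,y)=\mu(y,x)$ for all $x,y\in K$. Then $K\ltimes_{\mu\theta}Z$ (where $(\mu\theta)(x,y)=\mu(x,y)\theta(x,y)$) is a commutative A-loop, and its left inner mappings $w\mapsto (uv)\backslash(u(vw))$ coincide with those of $K\ltimes_\theta Z$.
   Context: A loop cocycle is a map $\theta:K\times K\to Z$ with $\theta(x,1)=\theta(1,x)=1$ for all $x\in K$; a group cocycle additionally satisfies $\theta(x,y)\theta(xy,z)=\theta(y,z)\theta(x,yz)$. $K\ltimes_\theta Z$ is the loop on $K\times Z$ with $(x,a)(y,b)=(xy,\,ab\,\theta(x,y))$. An A-loop is a loop all of whose inner mappings (elements of the group generated by $L_{x,y}=L_{yx}^{-1}L_yL_x$, $R_{x,y}=R_{xy}^{-1}R_yR_x$, $T_x=L_x^{-1}R_x$) are automorphisms. *)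

(* plain types with explicit operations (groups may be infinite). *)
Set Implicit Arguments.

Record is_group (G : Type) (mul : G -> G -> G) (e : G) (inv : G -> G) : Prop := {
  g_assoc : forall x y z, mul x (mul y z) = mul (mul x y) z;
  g_mul1 : forall x, mul e x = x;
  g_mulr1 : forall x, mul x e = x;
  g_invl : forall x, mul (inv x) x = e;
  g_invr : forall x, mul x (inv x) = e }.

Definition is_abelian_group (G : Type) (mul : G -> G -> G) (e : G) (inv : G -> G) : Prop :=
  is_group mul e inv /\ forall x y, mul x y = mul y x.

Definition loop_cocycle (K Z : Type) (eK : K) (eZ : Z) (th : K -> K -> Z) : Prop :=
  forall x, th x eK = eZ /\ th eK x = eZ.

Definition group_cocycle (K Z : Type) (mulK : K -> K -> K) (mulZ : Z -> Z -> Z)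
  (eK : K) (eZ : Z) (th : K -> K -> Z) : Prop :=
  loop_cocycle eK eZ th /\
  forall x y z, mulZ (th x y) (th (mulK x y) z) = mulZ (th y z) (th x (mulK y z)).

Definition cocycle_mul (K Z : Type) (mulZ : Z -> Z -> Z) (mu th : K -> K -> Z) : K -> K -> Z :=
  fun x y => mulZ (mu x y) (th x y).

Definition sd_mul (K Z : Type) (mulK : K -> K -> K) (mulZ : Z -> Z -> Z)
  (th : K -> K -> Z) (p q : K * Z) : K * Z :=
  (mulK (fst p) (fst q), mulZ (mulZ (snd p) (snd q)) (th (fst p) (fst q))).

Definition sd_ldiv (K Z : Type) (mulK : K -> K -> K) (invK : K -> K)
  (mulZ : Z -> Z -> Z) (invZ : Z -> Z) (th : K -> K -> Z) (p r : K * Z) : K * Z :=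
  let y := mulK (invK (fst p)) (fst r) in
  (y, mulZ (mulZ (snd r) (invZ (snd p))) (invZ (th (fst p) y))).

Definition sd_rdiv (K Z : Type) (mulK : K -> K -> K) (invK : K -> K)
  (mulZ : Z -> Z -> Z) (invZ : Z -> Z) (th : K -> K -> Z) (r q : K * Z) : K * Z :=
  let x := mulK (fst r) (invK (fst q)) in
  (x, mulZ (mulZ (snd r) (invZ (snd q))) (invZ (th x (fst q)))).

Record is_loop (Q : Type) (mul ldiv rdiv : Q -> Q -> Q) (e : Q) : Prop := {
  l_mul1 : forall x, mul e x = x;
  l_mulr1 : forall x, mul x e = x;
  l_mulK : forall x y, mul x (ldiv x y) = y;
  l_ldivK : forall x y, ldiv x (mul x y) = y;
  l_rdivK : forall x y, mul (rdiv y x) x = y;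
  l_mulrK : forall x y, rdiv (mul y x) x = y }.

(* Inner mappings, maps composed right-to-left (f g = f o g):
   L_{x,y} = L_{yx}^{-1} L_y L_x : w |-> (yx)\(y(xw))
   R_{x,y} = R_{xy}^{-1} R_y R_x : w |-> ((wx)y)/(xy)
   T_x     = L_x^{-1} R_x        : w |-> x\(wx)            *)
Definition Lmap (Q : Type) (mul ldiv : Q -> Q -> Q) (x y : Q) : Q -> Q :=
  fun w => ldiv (mul y x) (mul y (mul x w)).
Definition Rmap (Q : Type) (mul rdiv : Q -> Q -> Q) (x y : Q) : Q -> Q :=
  fun w => rdiv (mul (mul w x) y) (mul x y).
Definition Tmap (Q : Type) (mul ldiv : Q -> Q -> Q) (x : Q) : Q -> Q :=
  fun w => ldiv x (mul w x).

(* the inner mapping group: the subgroup of Sym(Q) generated by these maps *)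
Inductive inner_map (Q : Type) (mul ldiv rdiv : Q -> Q -> Q) : (Q -> Q) -> Prop :=
| im_L x y : inner_map mul ldiv rdiv (Lmap mul ldiv x y)
| im_R x y : inner_map mul ldiv rdiv (Rmap mul rdiv x y)
| im_T x : inner_map mul ldiv rdiv (Tmap mul ldiv x)
| im_id : inner_map mul ldiv rdiv (fun w => w)
| im_comp f g : inner_map mul ldiv rdiv f -> inner_map mul ldiv rdiv g ->
    inner_map mul ldiv rdiv (fun w => f (g w))
| im_inv f g : inner_map mul ldiv rdiv f ->
    (forall w, g (f w) = w) -> (forall w, f (g w) = w) -> inner_map mul ldiv rdiv g
| im_ext f g : inner_map mul ldiv rdiv f -> (forall w, g w = f w) ->
    inner_map mul ldiv rdiv g.

Definition is_automorphism (Q : Type) (mul : Q -> Q -> Q) (f : Q -> Q) : Prop :=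
  (exists g : Q -> Q, (forall x, g (f x) = x) /\ (forall x, f (g x) = x)) /\
  (forall x y, f (mul x y) = mul (f x) (f y)).

Definition A_loop (Q : Type) (mul ldiv rdiv : Q -> Q -> Q) (e : Q) : Prop :=
  is_loop mul ldiv rdiv e /\
  forall f, inner_map mul ldiv rdiv f -> is_automorphism mul f.

Definition commutative_A_loop (Q : Type) (mul ldiv rdiv : Q -> Q -> Q) (e : Q) : Prop :=
  A_loop mul ldiv rdiv e /\ forall x y, mul x y = mul y x.


Set Implicit Arguments.

(* Write Q0 = K x|_theta Z and Q1 = K x|_(mu theta) Z on the carrier K * Z.
   1. Q1 is a loop because mu theta is again a loop cocycle, and it is
      commutative because commutativity of Q0 forces K to be abelian and
      theta to be symmetric, while mu is symmetric by hypothesis.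
   2. The cocycle identity for mu makes the left inner mappings L_{x,y} of
      Q0 and Q1 coincide (this is the second claim of the theorem).
   3. In a commutative loop R_{x,y} = L_{x,y} and T_x = id, so every inner
      mapping lies in any family of maps that contains the L_{x,y} and is
      closed under identity, composition, inverses and extensionality.
      Hence every inner mapping f of Q1 is an inner mapping of Q0, thus an
      automorphism of Q0, and f is "vertical": f (z, c) = (z, c g(z)).
   4. A vertical map is an endomorphism of K x|_theta Z iff g : K -> Z is a
      homomorphism, whatever theta is; so f is an automorphism of Q1 too. *)

Section Group.
Context {G : Type} {mul : G -> G -> G} {e : G} {inv : G -> G}.
Hypothesis HG : is_group mul e inv.

Lemma mulKg x y : mul (inv x) (mul x y) = y.
Proof. now rewrite (g_assoc HG), (g_invl HG), (g_mul1 HG). Qed.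

Lemma mulKVg x y : mul x (mul (inv x) y) = y.
Proof. now rewrite (g_assoc HG), (g_invr HG), (g_mul1 HG). Qed.

Lemma mulgKV x y : mul (mul x (inv y)) y = x.
Proof. now rewrite <- (g_assoc HG), (g_invl HG), (g_mulr1 HG). Qed.

Lemma mulgK x y : mul (mul x y) (inv y) = x.
Proof. now rewrite <- (g_assoc HG), (g_invr HG), (g_mulr1 HG). Qed.

(* (xy)^{-1} (x (y z)) = z: the K-component of every left inner mapping. *)
Lemma mulKg2 x y z : mul (inv (mul x y)) (mul x (mul y z)) = z.
Proof. now rewrite (g_assoc HG x y z), mulKg. Qed.

End Group.

(* Rewriting rules for an abelian group, and the helper lemmas of a tactic
   deciding equalities between products of atoms and their inverses. *)
Section AbelianGroup.
Context {G : Type} {mul : G -> G -> G} {e : G} {inv : G -> G}.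
Hypothesis HA : is_abelian_group mul e inv.

Lemma ab_mulA x y z : mul (mul x y) z = mul x (mul y z).
Proof. now rewrite (g_assoc (proj1 HA)). Qed.

Lemma ab_mulC x y : mul x y = mul y x.
Proof. apply (proj2 HA). Qed.

Lemma ab_mul1 x : mul e x = x.
Proof. apply (g_mul1 (proj1 HA)). Qed.

Lemma ab_mulr1 x : mul x e = x.
Proof. apply (g_mulr1 (proj1 HA)). Qed.

Lemma ab_inv_unique x y : mul x y = e -> y = inv x.
Proof.
  intro Exy. rewrite <- (mulKg (proj1 HA) x y), Exy. apply ab_mulr1.
Qed.

Lemma ab_invK x : inv (inv x) = x.
Proof. symmetry. apply ab_inv_unique, (g_invl (proj1 HA)). Qed.

Lemma ab_inv1 : inv e = e.
Proof. symmetry. apply ab_inv_unique, ab_mul1. Qed.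

Lemma ab_invM x y : inv (mul x y) = mul (inv x) (inv y).
Proof.
  symmetry. apply ab_inv_unique.
  rewrite (ab_mulC (inv x)), ab_mulA, <- (ab_mulA y), (g_invr (proj1 HA)), ab_mul1.
  apply (g_invr (proj1 HA)).
Qed.

Lemma ab_eq_of_div x y : mul x (inv y) = e -> x = y.
Proof. intro E. now rewrite <- (mulgKV (proj1 HA) x y), E, ab_mul1. Qed.

Lemma ab_cancel_eq A B x y : A = B -> mul x B = mul y A -> x = y.
Proof.
  intros <- E. rewrite (ab_mulC x), (ab_mulC y) in E.
  now rewrite <- (mulKg (proj1 HA) A x), E, (mulKg (proj1 HA)).
Qed.

Lemma ab_front_here p : p = mul p e.
Proof. now rewrite ab_mulr1. Qed.

Lemma ab_front_step a p T T' : T = mul p T' -> mul a T = mul p (mul a T').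
Proof. intros ->. now rewrite <- !ab_mulA, (ab_mulC a p). Qed.

Lemma ab_cancel_inv h T T' : T = mul (inv h) T' -> T' = e -> mul h T = e.
Proof. intros -> ->. rewrite ab_mulr1. apply (g_invr (proj1 HA)). Qed.

Lemma ab_cancel_invV a T T' : T = mul a T' -> T' = e -> mul (inv a) T = e.
Proof. intros -> ->. rewrite ab_mulr1. apply (g_invl (proj1 HA)). Qed.

End AbelianGroup.

Arguments ab_cancel_eq {G mul e inv} HA {A B x y}.
Arguments ab_front_here {G mul e inv} HA p.
Arguments ab_front_step {G mul e inv} HA a {p T T'}.
Arguments ab_cancel_inv {G mul e inv} HA h {T T'}.
Arguments ab_cancel_invV {G mul e inv} HA a {T T'}.

(* [ab_front HZ mul p T] builds a proof of T = mul p T' for a right-nested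
   product T containing the factor p. *)
Ltac ab_front HZ mul p T :=
  lazymatch T with
  | mul p ?T' => let ty := type of T in constr:(@eq_refl ty T)
  | mul ?a ?T' => let E := ab_front HZ mul p T' in constr:(ab_front_step HZ a E)
  | p => constr:(ab_front_here HZ p)
  end.

(* [abelian HZ mul inv] proves an equation in the abelian group HZ: it reduces
   L = R to L R^{-1} = e, normalises to a right-nested product of atoms and
   inverted atoms, and cancels each atom against its inverse. *)
Ltac abelian HZ mul inv :=
  apply (ab_eq_of_div HZ);
  repeat progress rewrite ?(ab_mulA HZ), ?(ab_invM HZ), ?(ab_invK HZ),
    ?(ab_inv1 HZ), ?(ab_mul1 HZ), ?(ab_mulr1 HZ);
  repeat match goal with
  | |- mul ?h ?T = _ =>
      first [ let E := ab_front HZ mul (inv h) T in apply (ab_cancel_inv HZ h E)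
            | lazymatch h with inv ?a =>
                let E := ab_front HZ mul a T in apply (ab_cancel_invV HZ a E) end ]
  end; reflexivity.

Section CommutativeLoop.
Context {Q : Type} {mul ldiv rdiv : Q -> Q -> Q} {e : Q}.
Hypothesis HL : is_loop mul ldiv rdiv e.
Hypothesis HC : forall x y, mul x y = mul y x.

Lemma comm_rdiv_ldiv x y : rdiv y x = ldiv x y.
Proof. now rewrite <- (l_ldivK HL x (rdiv y x)), HC, (l_rdivK HL). Qed.

Lemma comm_Rmap x y w : Rmap mul rdiv x y w = Lmap mul ldiv x y w.
Proof.
  unfold Rmap, Lmap. now rewrite comm_rdiv_ldiv, (HC x y), (HC _ y), (HC w x).
Qed.

Lemma comm_Tmap x w : Tmap mul ldiv x w = w.
Proof. unfold Tmap. rewrite HC. apply (l_ldivK HL). Qed.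

End CommutativeLoop.

Definition closed_map_family (Q : Type) (P : (Q -> Q) -> Prop) : Prop :=
  P (fun w => w)
  /\ (forall f g, P f -> P g -> P (fun w => f (g w)))
  /\ (forall f g, P f -> (forall w, g (f w) = w) -> (forall w, f (g w) = w) -> P g)
  /\ (forall f g, P f -> (forall w, g w = f w) -> P g).

Lemma inner_map_closed (Q : Type) (mul ldiv rdiv : Q -> Q -> Q) :
  closed_map_family (inner_map mul ldiv rdiv).
Proof.
  repeat split.
  - apply im_id.
  - apply im_comp.
  - apply im_inv.
  - apply im_ext.
Qed.

Lemma comm_inner_map_ind (Q : Type) (mul ldiv rdiv : Q -> Q -> Q) (e : Q)
  (P : (Q -> Q) -> Prop) :
  is_loop mul ldiv rdiv e -> (forall x y, mul x y = mul y x) ->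
  closed_map_family P -> (forall x y, P (Lmap mul ldiv x y)) ->
  forall f, inner_map mul ldiv rdiv f -> P f.
Proof.
  intros HL HC [Pid [Pcomp [Pinv Pext]]] PL.
  induction 1 as [x y | x y | x | | | |].
  - apply PL.
  - apply (Pext _ _ (PL x y)). intro w. apply (comm_Rmap HL HC).
  - apply (Pext _ _ Pid). intro w. apply (comm_Tmap HL HC).
  - exact Pid.
  - now apply Pcomp.
  - eapply Pinv; eassumption.
  - eapply Pext; eassumption.
Qed.

Section Semidirect.
Variables (K Z : Type) (mulK : K -> K -> K) (eK : K) (invK : K -> K)
  (mulZ : Z -> Z -> Z) (eZ : Z) (invZ : Z -> Z).
Hypothesis HK : is_group mulK eK invK.
Hypothesis HZ : is_abelian_group mulZ eZ invZ.

Local Notation sdm th := (sd_mul mulK mulZ th).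
Local Notation sdl th := (sd_ldiv mulK invK mulZ invZ th).
Local Notation sdr th := (sd_rdiv mulK invK mulZ invZ th).

Ltac zsolve := abelian HZ mulZ invZ.

Lemma sd_is_loop th : loop_cocycle eK eZ th -> is_loop (sdm th) (sdl th) (sdr th) (eK, eZ).
Proof.
  intro Hth.
  split; intros [x a]; try intros [y b]; unfold sd_mul, sd_ldiv, sd_rdiv; simpl.
  - rewrite (g_mul1 HK). destruct (Hth x) as [_ ->]. f_equal. zsolve.
  - rewrite (g_mulr1 HK). destruct (Hth x) as [-> _]. f_equal. zsolve.
  - rewrite (mulKVg HK). f_equal. zsolve.
  - rewrite (mulKg HK). f_equal. zsolve.
  - rewrite (mulgKV HK). f_equal. zsolve.
  - rewrite (mulgK HK). f_equal. zsolve.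
Qed.

Lemma cocycle_mul_loop_cocycle mu th :
  loop_cocycle eK eZ mu -> loop_cocycle eK eZ th ->
  loop_cocycle eK eZ (cocycle_mul mulZ mu th).
Proof.
  intros Hmu Hth x. unfold cocycle_mul.
  destruct (Hmu x) as [-> ->], (Hth x) as [-> ->]. now rewrite (ab_mul1 HZ).
Qed.

Lemma sd_commutative_iff th :
  (forall p q, sdm th p q = sdm th q p)
  <-> (forall x y, mulK x y = mulK y x) /\ (forall x y, th x y = th y x).
Proof.
  split.
  - intro HC. split; intros x y; pose proof (HC (x, eZ) (y, eZ)) as E.
    + exact (f_equal fst E).
    + apply (f_equal snd) in E. simpl in E. now rewrite !(ab_mul1 HZ) in E.
  - intros [HKC Hth] [x a] [y b]. unfold sd_mul. simpl.
    rewrite (HKC x y), (Hth x y). f_equal. zsolve.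
Qed.

Lemma Lmap_cocycle_twist mu th u v w :
  group_cocycle mulK mulZ eK eZ mu ->
  Lmap (sdm (cocycle_mul mulZ mu th)) (sdl (cocycle_mul mulZ mu th)) u v w
  = Lmap (sdm th) (sdl th) u v w.
Proof.
  intros [_ Hcoc]. destruct u as [x a], v as [y b], w as [z c].
  unfold Lmap, sd_ldiv, sd_mul, cocycle_mul. simpl.
  rewrite !(mulKg2 HK). f_equal.
  assert (E : mu x z = mulZ (mulZ (mu y x) (mu (mulK y x) z)) (invZ (mu y (mulK x z)))).
  { rewrite (Hcoc y x z). zsolve. }
  rewrite E. zsolve.
Qed.

Definition vertical (f : K * Z -> K * Z) : Prop :=
  exists g : K -> Z, forall z c, f (z, c) = (z, mulZ c (g z)).

Lemma Lmap_vertical th u v : vertical (Lmap (sdm th) (sdl th) u v).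
Proof.
  exists (fun z => snd (Lmap (sdm th) (sdl th) u v (z, eZ))).
  intros z c. destruct u as [x a], v as [y b].
  unfold Lmap, sd_ldiv, sd_mul. simpl.
  rewrite !(mulKg2 HK). f_equal. zsolve.
Qed.

Lemma vertical_closed : closed_map_family vertical.
Proof.
  repeat split.
  - exists (fun _ => eZ). intros z c. now rewrite (ab_mulr1 HZ).
  - intros f g [gf Hf] [gg Hg]. exists (fun z => mulZ (gg z) (gf z)).
    intros z c. rewrite Hg, Hf. f_equal. zsolve.
  - intros f g [gf Hf] _ Hfg. exists (fun z => invZ (gf z)). intros z c.
    destruct (g (z, c)) as [z' c'] eqn:Eg.
    pose proof (Hfg (z, c)) as E. rewrite Eg, Hf in E. injection E as -> E.
    f_equal. rewrite <- E. zsolve.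
  - intros f g [gf Hf] Hext. exists gf. intros z c. now rewrite Hext.
Qed.

(* A vertical map is an endomorphism of K x|_theta Z iff its Z-part is a
   homomorphism K -> Z; in particular this does not depend on theta. *)
Lemma vertical_morph_iff th (f : K * Z -> K * Z) (g : K -> Z) :
  (forall z c, f (z, c) = (z, mulZ c (g z))) ->
  (forall p q, f (sdm th p q) = sdm th (f p) (f q))
  <-> (forall x y, g (mulK x y) = mulZ (g x) (g y)).
Proof.
  intro Hf. split.
  - intros Hhom x y. pose proof (f_equal snd (Hhom (x, eZ) (y, eZ))) as E.
    unfold sd_mul in E. simpl in E. rewrite !Hf in E. simpl in E.
    apply (ab_cancel_eq HZ E). zsolve.
  - intros Hg [x a] [y b]. unfold sd_mul. simpl. rewrite !Hf. simpl.
    rewrite Hg. f_equal. zsolve.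
Qed.

Lemma vertical_automorphism_transfer th th' f :
  vertical f -> is_automorphism (sdm th) f -> is_automorphism (sdm th') f.
Proof.
  intros [g Hf] [Hbij Hhom]. split; [exact Hbij |].
  apply (@vertical_morph_iff th' f g Hf), (@vertical_morph_iff th f g Hf), Hhom.
Qed.

End Semidirect.

Theorem lemma4p11 (K Z : Type)
  (mulK : K -> K -> K) (eK : K) (invK : K -> K)
  (mulZ : Z -> Z -> Z) (eZ : Z) (invZ : Z -> Z)
  (HK : is_group mulK eK invK) (HZ : is_abelian_group mulZ eZ invZ)
  (theta : K -> K -> Z) (Htheta : loop_cocycle eK eZ theta)
  (HA : commutative_A_loop (sd_mul mulK mulZ theta)
          (sd_ldiv mulK invK mulZ invZ theta) (sd_rdiv mulK invK mulZ invZ theta) (eK, eZ))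
  (mu : K -> K -> Z) (Hmu : group_cocycle mulK mulZ eK eZ mu)
  (Hsym : forall x y, mu x y = mu y x) :
  commutative_A_loop (sd_mul mulK mulZ (cocycle_mul mulZ mu theta))
    (sd_ldiv mulK invK mulZ invZ (cocycle_mul mulZ mu theta))
    (sd_rdiv mulK invK mulZ invZ (cocycle_mul mulZ mu theta)) (eK, eZ)
  /\ forall u v w : K * Z,
    sd_ldiv mulK invK mulZ invZ (cocycle_mul mulZ mu theta)
      (sd_mul mulK mulZ (cocycle_mul mulZ mu theta) u v)
      (sd_mul mulK mulZ (cocycle_mul mulZ mu theta) u
         (sd_mul mulK mulZ (cocycle_mul mulZ mu theta) v w))
    = sd_ldiv mulK invK mulZ invZ theta
      (sd_mul mulK mulZ theta u v)
      (sd_mul mulK mulZ theta u (sd_mul mulK mulZ theta v w)).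
Proof.
  destruct HA as [[_ Haut0] Hcomm0].
  destruct (proj1 (sd_commutative_iff mulK HZ theta) Hcomm0) as [HKcomm Hthsym].
  assert (Hloop1 := sd_is_loop HK HZ (cocycle_mul_loop_cocycle HZ (proj1 Hmu) Htheta)).
  assert (Hcomm1 : forall p q, sd_mul mulK mulZ (cocycle_mul mulZ mu theta) p q
                             = sd_mul mulK mulZ (cocycle_mul mulZ mu theta) q p).
  { apply (sd_commutative_iff mulK HZ). split; [exact HKcomm |].
    intros x y. unfold cocycle_mul. now rewrite Hsym, Hthsym. }
  assert (HL := fun u v w => Lmap_cocycle_twist HK HZ theta u v w Hmu).
  (* the second claim is the identity L_{v,u} = L_{v,u} between the two loops *)
  split; [| intros u v w; exact (HL v u w)].
  split; [split; [exact Hloop1 |] | exact Hcomm1].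
  intros f Hf. apply (vertical_automorphism_transfer HZ (th := theta)).
  - (* inner mappings of a commutative loop are composites of vertical L_{x,y} *)
    apply (comm_inner_map_ind Hloop1 Hcomm1 (vertical_closed K HZ)); [| exact Hf].
    intros u v. apply (Lmap_vertical HK HZ).
  - (* they are inner mappings of K x|_theta Z, hence automorphisms of it *)
    apply Haut0.
    apply (comm_inner_map_ind Hloop1 Hcomm1 (inner_map_closed _ _ _)); [| exact Hf].
    intros u v. apply (im_ext _ (im_L _ _ _ u v)), HL.
Qed.
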